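(* Let $f\in C^1([0,1],\mathbb{R})$ satisfy $f(0)=f(1)=0$, $f(s)>0$ for all $s\in(0,1)$, $f'(1)<0$, and suppose there exist $s_0\in(0,1)$, $K\ge 0$, $\alpha>0$ and $r>0$ such that $f(s)\le r\frac{s}{(1+|\ln s|)^\alpha}$ for all $s\in(0,1)$ and $f(s)\ge r\frac{s}{(1+|\ln s|)^\alpha}(1-Ks)$ for all $s\in(0,s_0]$. Let $u_0:\mathbb{R}\to[0,1]$ be uniformly continuous with $u_0>0$ on $\mathbb{R}$, $\liminf_{x\to-\infty}u_0>0$, $\lim_{x\to+\infty}u_0=0$, of class $C^2$ and nonincreasing on $[\xi_0,+\infty)$ for some $\xi_0>0$, and such that $\varphi_0:=-\ln u_0$ satisfies $\varphi_0'=o(\varphi_0^{-\alpha})$ and $\varphi_0''=o(\varphi_0')$ as $x\to+\infty$. Let $\varepsilon>0$ and $\rho$ with $\max\{r-\frac{\varepsilon}{2},\frac34 r\}<\rho<r$. Define $$w(t,x):=\exp\Big\{1-\big[(1+\varphi_0(x))^{\alpha+1}-\rho(\alpha+1)t\big]^{\frac{1}{\alpha+1}}\Big\},\qquad x_0(t):=\sup\Big\{x: u_0(x)=\exp\big(1-(\rho(\alpha+1)t+1)^{\frac{1}{\alpha+1}}\big)\Big\},$$ $\xi_1:=\max\{\xi_0,x_0(0)\}$, $\zeta:=\inf_{x<\xi_1}u_0(x)\in(0,1]$, and for $M\ge \max\{\frac{1}{2\zeta},\frac{1}{4s_0}\}$ let $g(y):=y(1-My)$, $$x_M(t):=\sup\Big\{x\in\mathbb{R}: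 u_0(x)=\exp\Big\{1-\big((1+\ln(2M))^{\alpha+1}+\rho(\alpha+1)t\big)^{\frac{1}{\alpha+1}}\Big\}\Big\},$$ and $v(t,x):=\frac{1}{4M}$ for $x\le x_M(t)$, $v(t,x):=g(w(t,x))$ for $x>x_M(t)$. Then there exists $M$ large enough such that $v$ is a subsolution of $u_t=u_{xx}+f(u)$ for all $t>0$ and $x\in\mathbb{R}$, i.e. $v_t-v_{xx}-f(v)\le 0$ on each of the regions $\{x\le x_M(t)\}$ and $\{x>x_M(t)\}$.
   Context: One has $w(t,x_M(t))=\frac{1}{2M}$ and $w(t,x)<\frac{1}{2M}$ for $x>x_M(t)$, so $v$ is continuous and $0<v\le s_0$. *)

From Stdlib Require Import Reals.
From Coquelicot Require Import Coquelicot.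
Open Scope R_scope.

(* f is C^1 on [0,1] with derivative f' : one-sided derivatives at the
   endpoints (difference quotients taken within [0,1]) and f' continuous
   on [0,1] (relative to [0,1]). *)
Definition C1_on_01 (f f' : R -> R) : Prop :=
  (forall s, 0 <= s <= 1 ->
     filterlim (fun h => (f (s + h) - f s) / h)
       (within (fun h => h <> 0 /\ 0 <= s + h <= 1) (locally 0))
       (locally (f' s))) /\
  (forall s, 0 <= s <= 1 ->
     filterlim f' (within (fun y => 0 <= y <= 1) (locally s)) (locally (f' s))).

Definition unif_continuous (u : R -> R) : Prop :=
  forall e, 0 < e -> exists d, 0 < d /\
    forall x y, Rabs (x - y) < d -> Rabs (u x - u y) < e.

Definition C2_on_right (u : R -> R) (a : R) : Prop :=
  forall x, a < x ->
    ex_derive u x /\ ex_derive (Derive u) x /\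
    continuous (Derive (Derive u)) x /\
    locally x (fun y => ex_derive u y /\ ex_derive (Derive u) y).

Definition little_o_pinfty (a b : R -> R) : Prop :=
  forall e, 0 < e -> exists X, forall x, X <= x -> Rabs (a x) <= e * Rabs (b x).

Definition phi0 (u0 : R -> R) (x : R) : R := - ln (u0 x).

Definition w_fun (u0 : R -> R) (alpha rho t x : R) : R :=
  exp (1 - Rpower (Rpower (1 + phi0 u0 x) (alpha + 1) - rho * (alpha + 1) * t)
                  (1 / (alpha + 1))).

Definition x0_fun (u0 : R -> R) (alpha rho t : R) : Rbar :=
  Lub_Rbar (fun x => u0 x = exp (1 - Rpower (rho * (alpha + 1) * t + 1) (1 / (alpha + 1)))).

(* xi1 = max{xi0, x0(0)}  (x0(0) = -oo if the level set is empty) *)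
Definition xi1 (u0 : R -> R) (alpha rho xi0 : R) : R :=
  match x0_fun u0 alpha rho 0 with
  | Finite a => Rmax xi0 a
  | m_infty => xi0
  | p_infty => real p_infty
  end.

Definition zeta (u0 : R -> R) (alpha rho xi0 : R) : R :=
  real (Glb_Rbar (fun y => exists x, x < xi1 u0 alpha rho xi0 /\ y = u0 x)).

Definition g_fun (M y : R) : R := y * (1 - M * y).

Definition xM_fun (u0 : R -> R) (alpha rho M t : R) : R :=
  real (Lub_Rbar (fun x => u0 x =
    exp (1 - Rpower (Rpower (1 + ln (2 * M)) (alpha + 1) + rho * (alpha + 1) * t)
                    (1 / (alpha + 1))))).

Definition v_right (u0 : R -> R) (alpha rho M t x : R) : R :=
  g_fun M (w_fun u0 alpha rho t x).

Definition v_fun (u0 : R -> R) (alpha rho M t x : R) : R :=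
  if Rle_dec x (xM_fun u0 alpha rho M t) then 1 / (4 * M)
  else v_right u0 alpha rho M t x.

From Stdlib Require Import Reals Lra Psatz.
From Coquelicot Require Import Coquelicot.
Open Scope R_scope.

(* Write p = phi0 u0 x and c = rho (alpha + 1) t. Then w = exp (1 - psi) with
   psi = ((1 + p)^(alpha + 1) - c)^(1/(alpha + 1)), and v = g(w) to the right of x_M(t),
   where psi >= 1 + ln (2M), i.e. M w <= 1/2.  With E = psi^(-alpha) one finds
   v_t = (1 - 2Mw) w rho E, while dpsi/dp = E (1 + p)^alpha and psi is concave in p.
   The o(.) hypotheses on phi0' and phi0'' bound the terms of -v_xx by (r - rho)/4 * w E
   in total, except (1 - 2Mw) w psi'' phi0'^2, which is nonpositive by concavity.  On the other hand
   |ln v| <= psi - 1 + ln 2, so the lower bound on f gives f(v) >= r v E (1 - kappa)^2 with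
   kappa -> 0 as M -> oo, and this dominates.  M is also taken so large that 1/(2M) lies
   below the infimum of u0 on (-oo, X], which puts x_M(t) beyond the point X from which the
   o(.) estimates hold.  To the left of x_M(t), v is a constant in (0, 1), where f > 0. *)

Lemma exp_le_compat (x y : R) : x <= y -> exp x <= exp y.
Proof. intros [Hxy|<-]; [now left; apply exp_increasing|apply Rle_refl]. Qed.

Lemma ln_1p_le (u : R) : 0 <= u -> ln (1 + u) <= u.
Proof.
  intros Hu. rewrite <- (ln_exp u) at 2. apply ln_le; [lra|apply exp_ineq1_le].
Qed.

Lemma one_sub_le_inv_Rpower_1p (a u : R) :
  0 <= a -> 0 <= u -> 1 - a * u <= / Rpower (1 + u) a.
Proof.
  intros Ha Hu. unfold Rpower. rewrite <- exp_Ropp.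
  pose proof (exp_ineq1_le (- (a * ln (1 + u)))).
  pose proof (Rmult_le_compat_l a _ _ Ha (ln_1p_le u Hu)). lra.
Qed.

Lemma Rpower_1p_mul_Rpower_opp_le (a p : R) :
  0 <= a -> 1 <= p -> Rpower (1 + p) a * Rpower p (- a) <= Rpower 2 a.
Proof.
  intros Ha Hp. unfold Rpower. rewrite <- exp_plus. apply exp_le_compat.
  assert (ln (1 + p) <= ln 2 + ln p)
    by (rewrite <- ln_mult by lra; apply ln_le; lra).
  nra.
Qed.

Lemma Rpower_sub_1 (x y : R) : 0 < x -> Rpower x (y - 1) = Rpower x y / x.
Proof.
  intros Hx. rewrite <- (Rpower_1 x Hx) at 2. unfold Rminus.
  rewrite Rpower_plus, Rpower_Ropp, Rpower_1 by exact Hx. reflexivity.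
Qed.

Lemma Rpower_Rpower_inv (x y : R) : 0 < x -> y <> 0 -> Rpower (Rpower x y) (1 / y) = x.
Proof.
  intros Hx Hy. rewrite Rpower_mult. replace (y * (1 / y)) with 1 by (field; exact Hy).
  now apply Rpower_1.
Qed.

Lemma le_Rpower_Rpower_add (L b c : R) :
  0 < L -> 0 < b -> 0 <= c -> L <= Rpower (Rpower L b + c) (1 / b).
Proof.
  intros HL Hb Hc. rewrite <- (Rpower_Rpower_inv L b) at 1 by lra.
  apply Rle_Rpower_l; [left; apply Rdiv_lt_0_compat; lra|].
  split; [apply exp_pos|lra].
Qed.

Lemma is_derive_Rpower_base (x y : R) :
  0 < x -> is_derive (fun z => Rpower z y) x (y * Rpower x (y - 1)).
Proof. intros Hx. now apply is_derive_Reals, derivable_pt_lim_power. Qed.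

Lemma Derive_Rpower_base (x y : R) :
  0 < x -> Derive (fun z => Rpower z y) x = y * Rpower x (y - 1).
Proof. intros Hx. now apply is_derive_unique, is_derive_Rpower_base. Qed.

Lemma ex_derive_Rpower_base (x y : R) : 0 < x -> ex_derive (fun z => Rpower z y) x.
Proof. intros Hx. eexists. now apply is_derive_Rpower_base. Qed.

Lemma is_derive2_comp (h h1 h2 phi : R -> R) (x d2 : R) :
  locally x (fun y => ex_derive phi y /\
    is_derive h (phi y) (h1 (phi y)) /\ is_derive h1 (phi y) (h2 (phi y))) ->
  is_derive (Derive phi) x d2 ->
  locally x (fun y => is_derive (fun z => h (phi z)) y (h1 (phi y) * Derive phi y)) /\
  is_derive (Derive (fun z => h (phi z))) x
    (h2 (phi x) * Derive phi x ^ 2 + h1 (phi x) * d2).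
Proof.
  intros Hloc Hd2.
  assert (H1 : locally x (fun y => is_derive (fun z => h (phi z)) y (h1 (phi y) * Derive phi y))).
  { eapply filter_imp; [|exact Hloc]. intros y (Hphi & Hh & _).
    pose proof (is_derive_comp h phi y _ _ Hh (Derive_correct _ _ Hphi)) as H.
    rewrite Rmult_comm. exact H. }
  split; [exact H1|].
  destruct (locally_singleton _ _ Hloc) as (Hphi & _ & Hh1).
  apply (is_derive_ext_loc (fun z => h1 (phi z) * Derive phi z)).
  { eapply filter_imp; [|exact H1]. intros y Hy. symmetry. now apply is_derive_unique. }
  pose proof (Derive.is_derive_mult _ _ _ _ _
    (is_derive_comp h1 phi x _ _ Hh1 (Derive_correct _ _ Hphi)) Hd2) as H.
  simpl in H. unfold scal in H; simpl in H; unfold mult in H; simpl in H.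
  replace (h2 (phi x) * Derive phi x ^ 2 + h1 (phi x) * d2)
    with (Derive phi x * h2 (phi x) * Derive phi x + h1 (phi x) * d2) by ring.
  exact H.
Qed.

Lemma unif_continuous_continuity (u : R -> R) : unif_continuous u -> continuity u.
Proof.
  intros Hu x e He. destruct (Hu e He) as (d & Hd & Hud).
  exists d. split; [exact Hd|]. intros y [_ Hy]. now apply Hud.
Qed.

Lemma level_set_Lub_finite (u : R -> R) (l X Y : R) :
  continuity u -> l < u X -> (forall y, Y <= y -> u y < l) ->
  exists z, Lub_Rbar (fun x => u x = l) = Finite z.
Proof.
  intros Hu HX HY. set (Y' := Rmax Y (X + 1)).
  assert (HYY' : Y <= Y') by apply Rmax_l.
  assert (HXY' : X < Y') by (unfold Y'; pose proof (Rmax_r Y (X + 1)); lra).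
  assert (HY' : u Y' < l) by (apply HY, HYY').
  destruct (IVT (fun z => l - u z) X Y') as (z0 & _ & Hz0); [|exact HXY'|lra|lra|].
  { apply continuity_minus; [apply continuity_const; now intros ? ?|exact Hu]. }
  destruct (Lub_Rbar_correct (fun x => u x = l)) as [Hub Hleast].
  destruct (Lub_Rbar (fun x => u x = l)) as [z| |]; [now exists z|exfalso..].
  - apply (Hleast (Finite Y')). intros z Hz.
    destruct (Rle_or_lt Y' z) as [Hz'|Hz']; [pose proof (HY z ltac:(lra))|]; simpl; lra.
  - apply (Hub z0). simpl. lra.
Qed.

(* [real] sends an infinite [Lub_Rbar] to 0, hence the finiteness lemma above. *)
Lemma lt_level_right_of_Lub (u : R -> R) (l X Y : R) :
  continuity u -> l < u X -> (forall y, Y <= y -> u y < l) ->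
  forall y, real (Lub_Rbar (fun x => u x = l)) < y -> u y < l.
Proof.
  intros Hu HX HY y Hy.
  destruct (level_set_Lub_finite u l X Y Hu HX HY) as [z Hz].
  destruct (Lub_Rbar_correct (fun x => u x = l)) as [Hub _].
  rewrite Hz in Hub, Hy. simpl in Hy.
  destruct (Rlt_or_le (u y) l) as [Hlt|[Hgt|Heq]]; [exact Hlt|exfalso..].
  - set (Y' := Rmax Y (y + 1)).
    assert (HYY' : Y <= Y') by apply Rmax_l.
    assert (HyY' : y < Y') by (unfold Y'; pose proof (Rmax_r Y (y + 1)); lra).
    assert (HY' : u Y' < l) by (apply HY, HYY').
    destruct (IVT (fun w => l - u w) y Y') as (w & [Hyw _] & Hw); [|exact HyY'|lra|lra|].
    { apply continuity_minus; [apply continuity_const; now intros ? ?|exact Hu]. }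
    assert (Rbar_le w z) by (apply Hub; lra). simpl in *. lra.
  - assert (Rbar_le y z) by (apply Hub; now symmetry). simpl in *. lra.
Qed.

Lemma pos_lower_bound_left (u : R -> R) :
  continuity u -> (forall x, 0 < u x) ->
  (exists c X0, 0 < c /\ forall x, x <= X0 -> c <= u x) ->
  forall X, exists m, 0 < m /\ forall y, y <= X -> m <= u y.
Proof.
  intros Hu Hpos (c & X0 & Hc & HX0) X.
  destruct (continuity_ab_min u X0 (Rmax X0 X) (Rmax_l _ _) (fun z _ => Hu z))
    as (xm & Hxm & _).
  exists (Rmin c (u xm)). split; [now apply Rmin_pos|].
  intros y Hy. destruct (Rle_or_lt y X0).
  - apply Rle_trans with c; [apply Rmin_l|now apply HX0].
  - apply Rle_trans with (u xm); [apply Rmin_r|apply Hxm].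
    pose proof (Rmax_r X0 X). lra.
Qed.

Lemma eventually_lt_of_lim_0 (u : R -> R) (l : R) :
  is_lim u p_infty 0 -> 0 < l -> exists Y, forall y, Y <= y -> u y < l.
Proof.
  intros Hlim Hl. apply is_lim_spec in Hlim.
  destruct (Hlim (mkposreal l Hl)) as [Y HY]. exists (Y + 1). intros y Hy.
  specialize (HY y ltac:(lra)). simpl in HY. rewrite Rminus_0_r in HY.
  apply Rabs_lt_between in HY. lra.
Qed.

Lemma exists_small_pos (k b : R) :
  0 <= k -> 0 < b -> exists d, 0 < d <= 1 /\ d * k <= b.
Proof.
  intros Hk Hb. exists (Rmin 1 (b / (k + 1))).
  assert (Hd : 0 < b / (k + 1)) by (apply Rdiv_lt_0_compat; lra).
  split; [split; [apply Rmin_pos; lra|apply Rmin_l]|].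
  apply Rle_trans with (b / (k + 1) * k).
  - apply Rmult_le_compat_r; [exact Hk|apply Rmin_r].
  - apply (Rmult_le_reg_r (k + 1)); [lra|].
    replace (b / (k + 1) * k * (k + 1)) with (b * k) by (field; lra). nra.
Qed.

Lemma two_le_1_ln_2M (M : R) : 2 <= M -> 2 <= 1 + ln (2 * M).
Proof.
  intros HM. pose proof exp_le_3.
  assert (ln (exp 1) <= ln (2 * M)) by (apply ln_le; [apply exp_pos|lra]).
  rewrite ln_exp in *. lra.
Qed.

Lemma exists_large_M (M0 m K kappa a : R) :
  0 < m -> 0 < kappa ->
  exists M, M0 <= M /\ 2 <= M /\ 1 / (2 * M) < m /\ K / (2 * M) <= kappa /\
            a * ln 2 / (1 + ln (2 * M)) <= kappa.
Proof.
  intros Hm Hkappa.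
  set (M := Rmax (Rmax M0 2) (Rmax (1 / m) (Rmax (K / (2 * kappa)) (exp (a * ln 2 / kappa))))).
  assert (Rmax M0 2 <= M) by apply Rmax_l.
  assert (Rmax (1 / m) (Rmax (K / (2 * kappa)) (exp (a * ln 2 / kappa))) <= M) by apply Rmax_r.
  pose proof (Rmax_l M0 2). pose proof (Rmax_r M0 2).
  pose proof (Rmax_l (1 / m) (Rmax (K / (2 * kappa)) (exp (a * ln 2 / kappa)))).
  pose proof (Rmax_r (1 / m) (Rmax (K / (2 * kappa)) (exp (a * ln 2 / kappa)))).
  pose proof (Rmax_l (K / (2 * kappa)) (exp (a * ln 2 / kappa))).
  pose proof (Rmax_r (K / (2 * kappa)) (exp (a * ln 2 / kappa))).
  clearbody M. exists M.
  assert (HM : 2 <= M) by lra.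
  split; [lra|split; [exact HM|split; [|split]]].
  - apply (Rmult_lt_reg_l (2 * M)); [lra|].
    replace (2 * M * (1 / (2 * M))) with 1 by (field; lra).
    assert (1 / m * m <= M * m) by (apply Rmult_le_compat_r; lra).
    replace (1 / m * m) with 1 in * by (field; lra). nra.
  - apply (Rmult_le_reg_l (2 * M)); [lra|].
    replace (2 * M * (K / (2 * M))) with K by (field; lra).
    assert (K / (2 * kappa) * (2 * kappa) <= M * (2 * kappa))
      by (apply Rmult_le_compat_r; lra).
    replace (K / (2 * kappa) * (2 * kappa)) with K in * by (field; lra). nra.
  - assert (Hln : a * ln 2 / kappa <= ln (2 * M)).
    { rewrite <- (ln_exp (a * ln 2 / kappa)). apply ln_le; [apply exp_pos|lra]. }
    pose proof (two_le_1_ln_2M M HM).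
    apply (Rmult_le_reg_l (1 + ln (2 * M))); [lra|].
    replace ((1 + ln (2 * M)) * (a * ln 2 / (1 + ln (2 * M)))) with (a * ln 2) by (field; lra).
    assert (a * ln 2 / kappa * kappa <= ln (2 * M) * kappa) by (apply Rmult_le_compat_r; lra).
    replace (a * ln 2 / kappa * kappa) with (a * ln 2) in * by (field; lra). nra.
Qed.

Lemma little_o_pinfty_eventually2 (f1 g1 f2 g2 : R -> R) (delta x0 : R) :
  little_o_pinfty f1 g1 -> little_o_pinfty f2 g2 -> 0 < delta ->
  exists X, x0 <= X /\ forall x, X <= x ->
    Rabs (f1 x) <= delta * Rabs (g1 x) /\ Rabs (f2 x) <= delta * Rabs (g2 x).
Proof.
  intros H1 H2 Hdelta.
  destruct (H1 delta Hdelta) as [X1 HX1]. destruct (H2 delta Hdelta) as [X2 HX2].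
  exists (Rmax x0 (Rmax X1 X2)).
  pose proof (Rmax_l x0 (Rmax X1 X2)). pose proof (Rmax_r x0 (Rmax X1 X2)).
  pose proof (Rmax_l X1 X2). pose proof (Rmax_r X1 X2).
  split; [lra|]. intros x Hx. split; [apply HX1|apply HX2]; lra.
Qed.

Lemma quarter_inv_bounds (M s0 : R) :
  0 < s0 -> 2 <= M -> 1 / (4 * s0) <= M -> 0 < 1 / (4 * M) < 1 /\ 1 / (4 * M) <= s0.
Proof.
  intros Hs0 HM H4. split; [split|].
  - apply Rdiv_lt_0_compat; lra.
  - apply (Rmult_lt_reg_l (4 * M)); [lra|].
    replace (4 * M * (1 / (4 * M))) with 1 by (field; lra). lra.
  - apply (Rmult_le_reg_l (4 * M)); [lra|].
    replace (4 * M * (1 / (4 * M))) with 1 by (field; lra).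
    apply (Rmult_le_compat_r (4 * s0)) in H4; [|lra].
    replace (1 / (4 * s0) * (4 * s0)) with 1 in H4 by (field; lra). lra.
Qed.

Lemma const_subsolution (f : R -> R) (C t x : R) :
  0 <= f C -> Derive (fun _ : R => C) t - Derive_n (fun _ : R => C) 2 x - f C <= 0.
Proof. intros Hf. rewrite Derive_const, Derive_n_const. lra. Qed.

Lemma is_derive_phi0 (u : R -> R) (y : R) :
  ex_derive u y -> 0 < u y -> is_derive (phi0 u) y (- Derive u y / u y).
Proof.
  intros Hd Hpos. unfold phi0. auto_derive; [now split|].
  change (Derive (fun x => u x) y) with (Derive u y). unfold Rdiv. ring.
Qed.

Lemma ex_derive_phi0 (u : R -> R) (xi0 y : R) :
  C2_on_right u xi0 -> (forall z, 0 < u z) -> xi0 < y -> ex_derive (phi0 u) y.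
Proof.
  intros HC Hpos Hy. eexists. apply is_derive_phi0; [apply (HC y Hy)|apply Hpos].
Qed.

Lemma ex_derive_Derive_phi0 (u : R -> R) (xi0 x : R) :
  C2_on_right u xi0 -> (forall z, 0 < u z) -> xi0 < x -> ex_derive (Derive (phi0 u)) x.
Proof.
  intros HC Hpos Hx.
  apply ex_derive_ext_loc with (f := fun y => - Derive u y / u y).
  - eapply filter_imp; [|exact (open_gt xi0 x Hx)]. intros y Hy.
    symmetry. apply is_derive_unique, is_derive_phi0; [apply (HC y Hy)|apply Hpos].
  - destruct (HC x Hx) as (Hd1 & Hd2 & _). pose proof (Hpos x).
    auto_derive. repeat apply conj; auto; lra.
Qed.

(* The profile of v in the variables p and c: [w_fun u0 a rho t x] is
   [front_w a (rho * (a + 1) * t) (phi0 u0 x)] by conversion, and the [front_d*] are the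
   p-derivatives of [front_psi] and of [g_fun M (front_w a c p)]. *)
Definition front_A (a c p : R) : R := Rpower (1 + p) (a + 1) - c.
Definition front_psi (a c p : R) : R := Rpower (front_A a c p) (1 / (a + 1)).
Definition front_w (a c p : R) : R := exp (1 - front_psi a c p).
Definition front_E (a c p : R) : R := Rpower (front_A a c p) (1 / (a + 1) - 1).
Definition front_dpsi (a c p : R) : R := front_E a c p * Rpower (1 + p) a.
Definition front_d2psi (a c p : R) : R :=
  - (a * c * front_dpsi a c p) / ((1 + p) * front_A a c p).
Definition front_dv (a c M p : R) : R :=
  - (1 - 2 * M * front_w a c p) * front_w a c p * front_dpsi a c p.
Definition front_d2v (a c M p : R) : R :=
  front_w a c p * (1 - 4 * M * front_w a c p) * front_dpsi a c p ^ 2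
  - (1 - 2 * M * front_w a c p) * front_w a c p * front_d2psi a c p.

Section Front_derivatives.
Variables (a c M p : R).
Hypotheses (Ha : a + 1 <> 0) (Hp : 0 < 1 + p) (HA : 0 < front_A a c p).

Lemma is_derive_front_A : is_derive (fun q => front_A a c q) p ((a + 1) * Rpower (1 + p) a).
Proof.
  unfold front_A. auto_derive; [now apply ex_derive_Rpower_base|].
  rewrite Derive_Rpower_base by exact Hp. replace (a + 1 - 1) with a by ring. ring.
Qed.

Lemma is_derive_front_psi : is_derive (fun q => front_psi a c q) p (front_dpsi a c p).
Proof.
  pose proof is_derive_front_A as HdA.
  unfold front_psi. auto_derive.
  - repeat apply conj; auto using ex_derive_Rpower_base. eexists; exact HdA.
  - rewrite (is_derive_unique (fun q : R => front_A a c q) _ _ HdA), Derive_Rpower_base by exact HA.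
    unfold front_dpsi, front_E. field. exact Ha.
Qed.

Lemma is_derive_front_dpsi : is_derive (fun q => front_dpsi a c q) p (front_d2psi a c p).
Proof.
  pose proof is_derive_front_A as HdA.
  unfold front_dpsi, front_E. auto_derive.
  - repeat apply conj; auto using ex_derive_Rpower_base. eexists; exact HdA.
  - rewrite (is_derive_unique (fun q : R => front_A a c q) _ _ HdA),
      !Derive_Rpower_base by assumption.
    unfold front_d2psi, front_dpsi, front_E.
    rewrite (Rpower_sub_1 (1 + p) a), (Rpower_sub_1 (front_A a c p) (1 / (a + 1) - 1))
      by assumption.
    assert (Hc : c = Rpower (1 + p) a * (1 + p) - front_A a c p)
      by (unfold front_A; rewrite Rpower_plus, Rpower_1 by exact Hp; ring).
    set (A := front_A a c p) in *. set (E := Rpower A (1 / (a + 1) - 1)).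
    set (P := Rpower (1 + p) a) in *. clearbody A E P. subst c.
    field. lra.
Qed.

Lemma is_derive_front_w :
  is_derive (fun q => front_w a c q) p (- front_w a c p * front_dpsi a c p).
Proof.
  pose proof is_derive_front_psi as Hd.
  unfold front_w. auto_derive; [repeat apply conj; try exact I; eexists; eassumption|].
  rewrite (is_derive_unique (fun q : R => front_psi a c q) _ _ Hd). unfold Rminus. ring.
Qed.

Lemma is_derive_front_v :
  is_derive (fun q => g_fun M (front_w a c q)) p (front_dv a c M p).
Proof.
  pose proof is_derive_front_w as Hd.
  unfold g_fun. auto_derive; [repeat apply conj; try exact I; eexists; eassumption|].
  rewrite (is_derive_unique (fun q : R => front_w a c q) _ _ Hd). unfold front_dv. ring.
Qed.

Lemma is_derive_front_dv : is_derive (fun q => front_dv a c M q) p (front_d2v a c M p).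
Proof.
  pose proof is_derive_front_w as Hw. pose proof is_derive_front_dpsi as Hdpsi.
  unfold front_dv. auto_derive; [repeat apply conj; try exact I; eexists; eassumption|].
  rewrite (is_derive_unique (fun q : R => front_w a c q) _ _ Hw),
    (is_derive_unique (fun q : R => front_dpsi a c q) _ _ Hdpsi).
  unfold front_d2v. ring.
Qed.

Lemma is_derive_front_psi_c :
  is_derive (fun c' => front_psi a c' p) c (- front_E a c p / (a + 1)).
Proof.
  unfold front_psi, front_A. auto_derive.
  - repeat apply conj; auto using ex_derive_Rpower_base.
  - rewrite Derive_Rpower_base by exact HA. unfold front_E, front_A, Rminus. field. exact Ha.
Qed.

End Front_derivatives.

Lemma is_derive_v_right_t (a rho M t p : R) :
  a + 1 <> 0 -> 0 < front_A a (rho * (a + 1) * t) p ->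
  is_derive (fun s => g_fun M (front_w a (rho * (a + 1) * s) p)) t
    ((1 - 2 * M * front_w a (rho * (a + 1) * t) p) * front_w a (rho * (a + 1) * t) p
     * rho * front_E a (rho * (a + 1) * t) p).
Proof.
  intros Ha HA. pose proof (is_derive_front_psi_c a _ p Ha HA) as Hd.
  unfold g_fun, front_w. auto_derive; [repeat apply conj; try exact I; eexists; eassumption|].
  rewrite (is_derive_unique (fun c' : R => front_psi a c' p) _ _ Hd).
  unfold Rminus. field. exact Ha.
Qed.

Lemma is_derive_v_right (u0 : R -> R) (a rho M t x d2 : R) :
  a + 1 <> 0 ->
  locally x (fun y => ex_derive (phi0 u0) y /\ 0 < 1 + phi0 u0 y /\
                      0 < front_A a (rho * (a + 1) * t) (phi0 u0 y)) ->
  is_derive (Derive (phi0 u0)) x d2 ->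
  is_derive (fun s => v_right u0 a rho M s x) t
    ((1 - 2 * M * front_w a (rho * (a + 1) * t) (phi0 u0 x))
     * front_w a (rho * (a + 1) * t) (phi0 u0 x) * rho
     * front_E a (rho * (a + 1) * t) (phi0 u0 x)) /\
  locally x (fun y => ex_derive (fun z => v_right u0 a rho M t z) y) /\
  is_derive (Derive (fun z => v_right u0 a rho M t z)) x
    (front_d2v a (rho * (a + 1) * t) M (phi0 u0 x) * Derive (phi0 u0) x ^ 2
     + front_dv a (rho * (a + 1) * t) M (phi0 u0 x) * d2).
Proof.
  intros Ha1 Hloc Hd2. set (c := rho * (a + 1) * t) in *.
  destruct (locally_singleton _ _ Hloc) as (_ & _ & HA).
  destruct (is_derive2_comp (fun q => g_fun M (front_w a c q)) (front_dv a c M) (front_d2v a c M)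
              (phi0 u0) x d2) as [Hspace1 Hspace2]; [|exact Hd2|].
  { eapply filter_imp; [|exact Hloc]. intros y (Hy & Hyp & HyA).
    split; [exact Hy|split; [apply is_derive_front_v|apply is_derive_front_dv]]; assumption. }
  split; [exact (is_derive_v_right_t a rho M t (phi0 u0 x) Ha1 HA)|split; [|exact Hspace2]].
  eapply filter_imp; [|exact Hspace1]. intros y Hy. eexists. exact Hy.
Qed.

Lemma front_E_eq (a c p : R) : a + 1 <> 0 -> front_E a c p = / Rpower (front_psi a c p) a.
Proof.
  intros Ha. unfold front_E, front_psi. rewrite <- Rpower_Ropp, Rpower_mult.
  f_equal. field. exact Ha.
Qed.

Lemma front_d2psi_nonpos (a c p : R) :
  0 <= a -> 0 <= c -> 0 < 1 + p -> 0 < front_A a c p -> front_d2psi a c p <= 0.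
Proof.
  intros Ha Hc Hp HA. unfold front_d2psi, Rdiv.
  assert (0 < front_dpsi a c p) by (apply Rmult_lt_0_compat; apply exp_pos).
  assert (0 < / ((1 + p) * front_A a c p))
    by (apply Rinv_0_lt_compat, Rmult_lt_0_compat; assumption).
  assert (0 <= a * c * front_dpsi a c p) by (apply Rmult_le_pos; [apply Rmult_le_pos|]; lra).
  nra.
Qed.

Lemma abs_front_dpsi_mul_le (a c p d1 d2 delta : R) :
  0 <= a -> 1 <= p -> delta <= 1 ->
  Rabs d1 <= delta * Rpower p (- a) -> Rabs d2 <= delta * Rabs d1 ->
  Rabs (front_dpsi a c p * d1) <= delta * Rpower 2 a * front_E a c p /\
  Rabs (front_dpsi a c p * d2) <= delta * Rpower 2 a * front_E a c p.
Proof.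
  intros Ha Hp Hdelta1 Hd1 Hd2.
  assert (HE : 0 < front_E a c p) by apply exp_pos.
  assert (HP : 0 < Rpower (1 + p) a) by apply exp_pos.
  assert (Hdpsi : 0 < front_dpsi a c p) by (apply Rmult_lt_0_compat; assumption).
  assert (Hdelta : 0 <= delta).
  { pose proof (Rabs_pos d1). pose proof (exp_pos (- a * ln p)). unfold Rpower in Hd1. nra. }
  pose proof (Rpower_1p_mul_Rpower_opp_le a p Ha Hp) as H2a.
  assert (HB : 0 <= delta * Rpower 2 a * front_E a c p)
    by (apply Rmult_le_pos; [apply Rmult_le_pos|]; [lra|left; apply exp_pos..]).
  rewrite !Rabs_mult, (Rabs_pos_eq (front_dpsi a c p)) by lra.
  assert (H1 : front_dpsi a c p * Rabs d1 <= delta * Rpower 2 a * front_E a c p).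
  { unfold front_dpsi.
    apply Rle_trans with (delta * front_E a c p * (Rpower (1 + p) a * Rpower p (- a))).
    - replace (delta * front_E a c p * (Rpower (1 + p) a * Rpower p (- a)))
        with (front_E a c p * Rpower (1 + p) a * (delta * Rpower p (- a))) by ring.
      apply Rmult_le_compat_l; [|exact Hd1]. apply Rmult_le_pos; lra.
    - replace (delta * Rpower 2 a * front_E a c p) with (delta * front_E a c p * Rpower 2 a)
        by ring.
      apply Rmult_le_compat_l; [apply Rmult_le_pos|]; lra. }
  split; [exact H1|].
  apply Rle_trans with (delta * (front_dpsi a c p * Rabs d1)); [nra|].
  apply Rle_trans with (delta * (delta * Rpower 2 a * front_E a c p));
    [apply Rmult_le_compat_l; lra|nra].
Qed.

Lemma front_region (a c L u : R) :
  0 < a -> 0 <= c -> 2 <= L -> 0 < u ->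
  u < exp (1 - Rpower (Rpower L (a + 1) + c) (1 / (a + 1))) ->
  1 <= - ln u /\ 0 < front_A a c (- ln u) /\ L <= front_psi a c (- ln u).
Proof.
  intros Ha Hc HL Hu Hlt.
  set (psiL := Rpower (Rpower L (a + 1) + c) (1 / (a + 1))) in *.
  assert (HLa : 0 < Rpower L (a + 1)) by apply exp_pos.
  assert (Hln : ln u < 1 - psiL)
    by (rewrite <- (ln_exp (1 - psiL)); now apply ln_increasing).
  assert (HpsiL : L <= psiL) by (apply le_Rpower_Rpower_add; lra).
  assert (Hpow : Rpower psiL (a + 1) = Rpower L (a + 1) + c).
  { unfold psiL. rewrite Rpower_mult. replace (1 / (a + 1) * (a + 1)) with 1 by (field; lra).
    apply Rpower_1; lra. }
  assert (HA : Rpower L (a + 1) < front_A a c (- ln u)).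
  { unfold front_A. assert (Rpower psiL (a + 1) < Rpower (1 + - ln u) (a + 1))
      by (apply Rlt_Rpower_l; lra).
    lra. }
  split; [lra|split; [lra|]].
  unfold front_psi. rewrite <- (Rpower_Rpower_inv L (a + 1)) at 1 by lra.
  apply Rle_Rpower_l; [left; apply Rdiv_lt_0_compat|]; lra.
Qed.

Section Subsolution_inequality.
Variables (f : R -> R) (a r rho K s0 M kappa delta : R).
Hypotheses (Ha : 0 < a) (Hrho : 0 < rho < r) (HK : 0 <= K) (HM : 2 <= M).
Hypothesis Hflo : forall s, 0 < s <= s0 ->
  r * (s / Rpower (1 + Rabs (ln s)) a) * (1 - K * s) <= f s.
Hypothesis Hs0 : 1 / (4 * M) <= s0.
Hypothesis HKkappa : K / (2 * M) <= kappa.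
Hypothesis Hakappa : a * ln 2 / (1 + ln (2 * M)) <= kappa.
Hypothesis Hkappa : 8 * r * kappa <= r - rho.
Hypothesis Hdelta : 0 < delta <= 1.
Hypothesis Hdelta_rho : delta * (Rpower 2 a ^ 2 + Rpower 2 a) <= (r - rho) / 4.

Lemma M_exp_le_half (psi : R) : 1 + ln (2 * M) <= psi -> M * exp (1 - psi) <= 1 / 2.
Proof.
  intros Hpsi.
  assert (exp (1 - psi) <= / (2 * M)).
  { rewrite <- (exp_ln (2 * M)), <- exp_Ropp by lra. apply exp_le_compat. lra. }
  replace (1 / 2) with (M * / (2 * M)) by (field; lra).
  apply Rmult_le_compat_l; lra.
Qed.

Lemma g_fun_front_bounds (psi : R) : 1 + ln (2 * M) <= psi ->
  0 < g_fun M (exp (1 - psi)) <= 1 / (4 * M) /\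
  Rabs (ln (g_fun M (exp (1 - psi)))) <= psi - 1 + ln 2.
Proof.
  intros Hpsi. pose proof (M_exp_le_half psi Hpsi) as Hy. pose proof (two_le_1_ln_2M M HM).
  set (W := exp (1 - psi)) in *. assert (HW : 0 < W) by apply exp_pos.
  assert (Hg : g_fun M W = W * (1 - M * W)) by reflexivity.
  assert (Hg0 : 0 < g_fun M W) by (rewrite Hg; nra).
  split; [split; [exact Hg0|]|].
  - apply (Rmult_le_reg_l (4 * M)); [lra|]. rewrite Hg.
    replace (4 * M * (1 / (4 * M))) with 1 by (field; lra).
    pose proof (pow2_ge_0 (2 * M * W - 1)). nra.
  - assert (Hln : ln (g_fun M W) = 1 - psi + ln (1 - M * W))
      by (rewrite Hg, ln_mult by nra; unfold W at 1; rewrite ln_exp; reflexivity).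
    assert (ln (1 - M * W) <= 0) by (rewrite <- ln_1; apply ln_le; nra).
    assert (- ln 2 <= ln (1 - M * W))
      by (rewrite <- ln_Rinv by lra; apply ln_le; [lra|]; lra).
    rewrite Rabs_left by lra. lra.
Qed.

Lemma f_g_fun_front_ge (psi : R) : 1 + ln (2 * M) <= psi ->
  r * g_fun M (exp (1 - psi)) * / Rpower psi a * (1 - kappa) ^ 2
  <= f (g_fun M (exp (1 - psi))).
Proof.
  intros Hpsi. pose proof (two_le_1_ln_2M M HM).
  destruct (g_fun_front_bounds psi Hpsi) as [[Hs0' Hs1] Hlns].
  set (s := g_fun M (exp (1 - psi))) in *.
  assert (Hkappa1 : kappa <= 1 / 8).
  { apply (Rmult_le_reg_l (8 * r)); lra. }
  assert (HKs : 1 - kappa <= 1 - K * s).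
  { assert (K * s <= K / (2 * M)); [|lra].
    unfold Rdiv. apply Rmult_le_compat_l; [exact HK|].
    apply Rle_trans with (1 / (4 * M)); [exact Hs1|].
    apply Rle_trans with (1 / (2 * M)); [|lra].
    apply Rmult_le_compat_l; [lra|]. apply Rinv_le_contravar; lra. }
  assert (Hden : / Rpower psi a * (1 - kappa) <= / Rpower (1 + Rabs (ln s)) a).
  { set (u := ln 2 / psi).
    assert (Hu : 0 <= u) by (apply Rdiv_le_0_compat; pose proof ln_lt_2; lra).
    assert (Hau : a * u <= kappa).
    { apply Rle_trans with (a * ln 2 / (1 + ln (2 * M))); [|exact Hakappa].
      unfold u, Rdiv. rewrite <- Rmult_assoc. apply Rmult_le_compat_l.
      - pose proof ln_lt_2. nra.
      - apply Rinv_le_contravar; lra. }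
    assert (Hsplit : Rpower psi a * Rpower (1 + u) a = Rpower (psi + ln 2) a).
    { rewrite Rpower_mult_distr by (try lra; pose proof ln_lt_2; unfold u;
        apply Rplus_lt_le_0_compat; lra).
      f_equal. unfold u. field. lra. }
    apply Rle_trans with (/ Rpower (psi + ln 2) a).
    - rewrite <- Hsplit, Rinv_mult.
      apply Rmult_le_compat_l; [left; apply Rinv_0_lt_compat, exp_pos|].
      pose proof (one_sub_le_inv_Rpower_1p a u ltac:(lra) Hu). lra.
    - apply Rinv_le_contravar; [apply exp_pos|].
      apply Rle_Rpower_l; [lra|]. split; [pose proof (Rabs_pos (ln s)); lra|lra]. }
  eapply Rle_trans; [|apply Hflo; lra].
  unfold Rdiv.
  assert (0 < / Rpower psi a) by (apply Rinv_0_lt_compat, exp_pos).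
  replace (r * s * / Rpower psi a * (1 - kappa) ^ 2)
    with ((r * s) * (/ Rpower psi a * (1 - kappa)) * (1 - kappa)) by ring.
  replace (r * (s * / Rpower (1 + Rabs (ln s)) a) * (1 - K * s))
    with ((r * s) * / Rpower (1 + Rabs (ln s)) a * (1 - K * s)) by ring.
  apply Rmult_le_compat; [| |apply Rmult_le_compat_l; [|exact Hden]|exact HKs].
  - apply Rmult_le_pos; apply Rmult_le_pos; lra.
  - lra.
  - apply Rmult_le_pos; lra.
Qed.

Lemma front_subsolution_ineq (psi P Q R0 : R) :
  1 + ln (2 * M) <= psi ->
  Rabs P <= delta * Rpower 2 a * / Rpower psi a ->
  Rabs Q <= delta * Rpower 2 a * / Rpower psi a ->
  R0 <= 0 ->
  (1 - 2 * M * exp (1 - psi)) * exp (1 - psi) * rho * / Rpower psi a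
  - (exp (1 - psi) * (1 - 4 * M * exp (1 - psi)) * P ^ 2
     - (1 - 2 * M * exp (1 - psi)) * exp (1 - psi) * R0
     - (1 - 2 * M * exp (1 - psi)) * exp (1 - psi) * Q)
  - f (g_fun M (exp (1 - psi))) <= 0.
Proof.
  intros Hpsi HP HQ HR0. pose proof (two_le_1_ln_2M M HM).
  pose proof (f_g_fun_front_ge psi Hpsi) as Hf.
  pose proof (M_exp_le_half psi Hpsi) as Hy.
  unfold g_fun in *. set (W := exp (1 - psi)) in *. set (E := / Rpower psi a) in *.
  set (T := Rpower 2 a) in *.
  assert (HW : 0 < W) by apply exp_pos. assert (HT : 0 < T) by apply exp_pos.
  assert (HE : 0 < E) by (apply Rinv_0_lt_compat, exp_pos).
  assert (HMW : 0 < M * W) by nra.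
  assert (HE1 : E <= 1).
  { unfold E. rewrite <- Rinv_1. apply Rinv_le_contravar; [lra|].
    rewrite <- (Rpower_O psi) by lra. apply Rle_Rpower; lra. }
  assert (HP2 : P ^ 2 <= delta * T ^ 2 * E).
  { assert (P ^ 2 <= (delta * T * E) ^ 2).
    { rewrite <- pow2_abs. apply pow_incr. split; [apply Rabs_pos|exact HP]. }
    assert (delta * E <= 1) by nra.
    assert (0 <= delta * T ^ 2 * E) by (apply Rmult_le_pos; [|lra]; nra).
    nra. }
  assert (HQ' : (1 - 2 * (M * W)) * Q <= delta * T * E).
  { pose proof (Rle_abs Q). pose proof (Rabs_pos Q).
    apply Rle_trans with (Rabs Q); [|exact HQ].
    destruct (Rle_or_lt 0 Q); nra. }
  assert (Hrr : (1 - 2 * (M * W)) * rho + (r - rho) / 4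
                <= r * (1 - M * W) * (1 - kappa) ^ 2).
  { assert (r * (1 - kappa) ^ 2 >= r - 2 * r * kappa) by nra. nra. }
  assert (Hsum : delta * T ^ 2 * E + delta * T * E <= (r - rho) / 4 * E).
  { replace (delta * T ^ 2 * E + delta * T * E) with (delta * (T ^ 2 + T) * E) by ring.
    apply Rmult_le_compat_r; lra. }
  assert (- (1 - 4 * (M * W)) * P ^ 2 <= P ^ 2) by (pose proof (pow2_ge_0 P); nra).
  assert ((1 - 2 * (M * W)) * R0 <= 0) by nra.
  assert (W * ((1 - 2 * (M * W)) * rho * E + (r - rho) / 4 * E)
          <= W * (r * (1 - M * W) * (1 - kappa) ^ 2 * E)).
  { apply Rmult_le_compat_l; [lra|].
    replace ((1 - 2 * (M * W)) * rho * E + (r - rho) / 4 * E)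
      with (((1 - 2 * (M * W)) * rho + (r - rho) / 4) * E) by ring.
    apply Rmult_le_compat_r; lra. }
  assert (W * (- (1 - 4 * (M * W)) * P ^ 2 + (1 - 2 * (M * W)) * R0 + (1 - 2 * (M * W)) * Q)
          <= W * ((r - rho) / 4 * E)) by (apply Rmult_le_compat_l; lra).
  nra.
Qed.

Lemma v_right_subsolution_at (u0 : R -> R) (t x : R) :
  0 <= t ->
  locally x (fun y => ex_derive (phi0 u0) y /\ 0 < 1 + phi0 u0 y /\
                      0 < front_A a (rho * (a + 1) * t) (phi0 u0 y)) ->
  1 <= phi0 u0 x ->
  1 + ln (2 * M) <= front_psi a (rho * (a + 1) * t) (phi0 u0 x) ->
  Rabs (Derive (phi0 u0) x) <= delta * Rabs (Rpower (phi0 u0 x) (- a)) ->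
  ex_derive (Derive (phi0 u0)) x ->
  Rabs (Derive (Derive (phi0 u0)) x) <= delta * Rabs (Derive (phi0 u0) x) ->
  ex_derive (fun s => v_right u0 a rho M s x) t /\
  locally x (fun y => ex_derive (fun z => v_right u0 a rho M t z) y) /\
  ex_derive_n (fun z => v_right u0 a rho M t z) 2 x /\
  Derive (fun s => v_right u0 a rho M s x) t
  - Derive_n (fun z => v_right u0 a rho M t z) 2 x
  - f (v_right u0 a rho M t x) <= 0.
Proof.
  intros Ht Hloc Hp1 Hpsi Hd1 [d2 Hd2] Hd2b.
  assert (Ha1 : a + 1 <> 0) by lra.
  destruct (is_derive_v_right u0 a rho M t x d2 Ha1 Hloc Hd2) as (Htime & Hspace1 & Hspace2).
  assert (Hc : 0 <= rho * (a + 1) * t) by (apply Rmult_le_pos; [|exact Ht]; nra).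
  set (c := rho * (a + 1) * t) in *. set (p := phi0 u0 x) in *.
  destruct (locally_singleton _ _ Hloc) as (_ & Hp & HA).
  split; [eexists; exact Htime|split; [exact Hspace1|split; [eexists; exact Hspace2|]]].
  replace (Derive (fun s => v_right u0 a rho M s x) t)
    with ((1 - 2 * M * front_w a c p) * front_w a c p * rho * front_E a c p)
    by (symmetry; apply is_derive_unique; exact Htime).
  replace (Derive_n (fun z => v_right u0 a rho M t z) 2 x)
    with (front_d2v a c M p * Derive (phi0 u0) x ^ 2 + front_dv a c M p * d2)
    by (symmetry; apply is_derive_unique; exact Hspace2).
  rewrite (is_derive_unique _ _ _ Hd2) in Hd2b.
  set (d1 := Derive (phi0 u0) x) in *.
  rewrite (Rabs_pos_eq (Rpower p (- a))) in Hd1 by (left; apply exp_pos).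
  destruct (abs_front_dpsi_mul_le a c p d1 d2 delta ltac:(lra) Hp1 (proj2 Hdelta) Hd1 Hd2b)
    as [HP HQ].
  assert (HR : front_d2psi a c p * d1 ^ 2 <= 0).
  { pose proof (front_d2psi_nonpos a c p ltac:(lra) Hc Hp HA). pose proof (pow2_ge_0 d1). nra. }
  rewrite front_E_eq in HP, HQ |- * by exact Ha1.
  eapply Rle_trans; [|exact (front_subsolution_ineq _ _ _ _ Hpsi HP HQ HR)]. apply Req_le.
  unfold front_d2v, front_dv, front_w.
  change (v_right u0 a rho M t x) with (g_fun M (exp (1 - front_psi a c p))). ring.
Qed.

End Subsolution_inequality.

Lemma right_of_xM (u0 : R -> R) (a rho M t X m : R) :
  0 < a -> 0 < rho -> 0 <= t -> 2 <= M ->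
  continuity u0 -> (forall x, 0 < u0 x) -> is_lim u0 p_infty 0 ->
  (forall y, y <= X -> m <= u0 y) -> 1 / (2 * M) < m ->
  forall y, xM_fun u0 a rho M t < y ->
  X < y /\ 1 <= phi0 u0 y /\ 0 < front_A a (rho * (a + 1) * t) (phi0 u0 y) /\
  1 + ln (2 * M) <= front_psi a (rho * (a + 1) * t) (phi0 u0 y).
Proof.
  intros Ha Hrho Ht HM Hu Hpos Hlim Hm HMm y Hy.
  assert (Hc : 0 <= rho * (a + 1) * t) by (apply Rmult_le_pos; [|exact Ht]; nra).
  pose proof (two_le_1_ln_2M M HM) as HL.
  set (c := rho * (a + 1) * t) in *. set (L := 1 + ln (2 * M)) in *.
  set (lvl := exp (1 - Rpower (Rpower L (a + 1) + c) (1 / (a + 1)))).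
  assert (Hlvl : lvl <= 1 / (2 * M)).
  { replace (1 / (2 * M)) with (exp (1 - L))
      by (unfold L; rewrite <- (exp_ln (2 * M)) at 2 by lra;
          unfold Rdiv; rewrite Rmult_1_l, <- exp_Ropp; f_equal; ring).
    apply exp_le_compat. pose proof (le_Rpower_Rpower_add L (a + 1) c). lra. }
  destruct (eventually_lt_of_lim_0 u0 lvl Hlim (exp_pos _)) as [Y HY].
  assert (HuX : lvl < u0 X) by (pose proof (Hm X (Rle_refl X)); lra).
  assert (Huy : u0 y < lvl) by exact (lt_level_right_of_Lub u0 lvl X Y Hu HuX HY y Hy).
  split.
  - destruct (Rlt_or_le X y) as [HXy|HyX]; [exact HXy|].
    pose proof (Hm y HyX). lra.
  - exact (front_region a c L (u0 y) Ha Hc HL (Hpos y) Huy).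
Qed.

Theorem lemma3p4
  (f f' : R -> R) (s0 K alpha r : R) (u0 : R -> R) (xi0 eps rho : R)
  (* hypotheses on f *)
  (Hf1 : C1_on_01 f f')
  (Hf0 : f 0 = 0) (Hf1' : f 1 = 0)
  (Hfpos : forall s, 0 < s < 1 -> 0 < f s)
  (Hfd1 : f' 1 < 0)
  (Hs0 : 0 < s0 < 1) (HK : 0 <= K) (Halpha : 0 < alpha) (Hr : 0 < r)
  (Hfup : forall s, 0 < s < 1 ->
     f s <= r * (s / Rpower (1 + Rabs (ln s)) alpha))
  (Hflo : forall s, 0 < s <= s0 ->
     r * (s / Rpower (1 + Rabs (ln s)) alpha) * (1 - K * s) <= f s)
  (* hypotheses on u0 *)
  (Hu0range : forall x, 0 <= u0 x <= 1)
  (Hu0uc : unif_continuous u0)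
  (Hu0pos : forall x, 0 < u0 x)
  (Hu0liminf : exists c X, 0 < c /\ forall x, x <= X -> c <= u0 x)
  (Hu0lim : is_lim u0 p_infty 0)
  (Hxi0 : 0 < xi0)
  (Hu0C2 : C2_on_right u0 xi0)
  (Hu0dec : forall x y, xi0 <= x -> x <= y -> u0 y <= u0 x)
  (Hphi1 : little_o_pinfty (Derive (phi0 u0))
             (fun x => Rpower (phi0 u0 x) (- alpha)))
  (Hphi2 : little_o_pinfty (Derive (Derive (phi0 u0))) (Derive (phi0 u0)))
  (* parameters *)
  (Heps : 0 < eps)
  (Hrho : Rmax (r - eps / 2) (3 / 4 * r) < rho /\ rho < r) :
  exists M : R,
    Rmax (1 / (2 * zeta u0 alpha rho xi0)) (1 / (4 * s0)) <= M /\
    forall t x, 0 < t ->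
      (x <= xM_fun u0 alpha rho M t ->
         Derive (fun _ : R => 1 / (4 * M)) t
         - Derive_n (fun _ : R => 1 / (4 * M)) 2 x
         - f (1 / (4 * M)) <= 0) /\
      (xM_fun u0 alpha rho M t < x ->
         ex_derive (fun s => v_right u0 alpha rho M s x) t /\
         locally x (fun y => ex_derive (fun z => v_right u0 alpha rho M t z) y) /\
         ex_derive_n (fun z => v_right u0 alpha rho M t z) 2 x /\
         Derive (fun s => v_right u0 alpha rho M s x) t
         - Derive_n (fun z => v_right u0 alpha rho M t z) 2 x
         - f (v_right u0 alpha rho M t x) <= 0).
Proof.
  destruct Hrho as [Hrho_lo Hrho_hi].
  assert (Hrho : 0 < rho) by (pose proof (Rmax_r (r - eps / 2) (3 / 4 * r)); lra).
  set (kappa := (r - rho) / (8 * r)).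
  assert (Hkappa : 8 * r * kappa <= r - rho) by (right; unfold kappa; field; lra).
  destruct (exists_small_pos (Rpower 2 alpha ^ 2 + Rpower 2 alpha) ((r - rho) / 4))
    as (delta & Hdelta & Hdelta_rho);
    [pose proof (exp_pos (alpha * ln 2)); unfold Rpower; nra|lra|].
  destruct (little_o_pinfty_eventually2 _ _ _ _ delta (xi0 + 1) Hphi1 Hphi2 (proj1 Hdelta))
    as (X & HXxi0 & HXo).
  pose proof (unif_continuous_continuity u0 Hu0uc) as Hu0cont.
  destruct (pos_lower_bound_left u0 Hu0cont Hu0pos Hu0liminf X) as (m & Hm0 & Hm).
  destruct (exists_large_M (Rmax (1 / (2 * zeta u0 alpha rho xi0)) (1 / (4 * s0))) m K kappa alpha)
    as (M & HM0 & HM & HMm & HKkappa & Hakappa); [exact Hm0|apply Rdiv_lt_0_compat; lra|].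
  destruct (quarter_inv_bounds M s0 (proj1 Hs0) HM (Rle_trans _ _ _ (Rmax_r _ _) HM0))
    as [Hquarter Hs0M].
  exists M. split; [exact HM0|]. intros t x Ht. split.
  - intros _. apply const_subsolution. left. now apply Hfpos.
  - intros Hx.
    pose proof (right_of_xM u0 alpha rho M t X m Halpha Hrho (Rlt_le _ _ Ht) HM Hu0cont Hu0pos
                  Hu0lim Hm HMm) as Hright.
    destruct (Hright x Hx) as (HXx & Hphi_ge & _ & Hpsi).
    apply (v_right_subsolution_at f alpha r rho K s0 M kappa delta Halpha (conj Hrho Hrho_hi)
             HK HM Hflo Hs0M HKkappa Hakappa Hkappa Hdelta Hdelta_rho u0 t x (Rlt_le _ _ Ht));
      [|exact Hphi_ge|exact Hpsi|apply HXo; lra|apply (ex_derive_Derive_phi0 u0 xi0); auto; lra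
       |apply HXo; lra].
    eapply filter_imp; [|exact (open_gt _ x Hx)]. intros y Hy.
    destruct (Hright y Hy) as (HXy & Hy1 & HyA & _).
    split; [apply (ex_derive_phi0 u0 xi0); auto; lra|split; lra].
Qed.
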